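(* Let $A$ be a basic connected finite dimensional algebra over an algebraically closed field $k$ with ordinary quiver $Q$ without oriented cycles. Let $\nu\colon kQ\twoheadrightarrow A$ be a presentation, $D\colon kQ\xrightarrow{\sim}kQ$ a dilatation, and $\mu:=\nu\circ D$. Let $I=\mathsf{Ker}(\mu)$ and $J=\mathsf{Ker}(\nu)$, so that $J=D(I)$ and (since $\sim_I=\sim_J$) $\pi_1(Q,I)=\pi_1(Q,J)$. Then $\theta_\mu=\theta_\nu$.
   Context: Fix a complete set $e_1,\dots,e_n$ of primitive orthogonal idempotents of $A$ indexed by $Q_0=\{1,\dots,n\}$, $E=\bigoplus ke_i$. A presentation is a surjective algebra map $\nu\colon kQ\twoheadrightarrow A$ with admissible kernel ($(kQ^+)^N\subseteq\mathsf{Ker}\,\nu\subseteq(kQ^+)^2$ for some $N\ge2$, $kQ^+$ the arrow ideal) and $\nu(e_i)=e_i$. A dilatation is an automorphism $D$ of $kQ$ with $D(e_i)=e_i$ for all $i$ and $D(\alpha)\in k\alpha$ for every arrow $\alpha$; it is known that if $J=D(I)$ then the homotopy relations $\sim_I$ and $\sim_J$ coincide. $\mathsf{HH}^1(A)=Der_0(A)/Int_0(A)$, with $Der_0(A)$ the derivations vanishing on all $e_i$ and $Int_0(A)=\{a\mapsto ea-ae\mid e\in E\}$. Walks: paths with formal inverse arrows allowed. $\sim_I$ is the smallest equivalence relation on walks with $\alpha\alpha^{-1}\sim_I e_y$, $\alpha^{-1}\alpha\sim_I e_x$ for arrows $\alpha\colon x\to y$, compatible with concatenation, and identifying two paths occurring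 with nonzero coefficient in a same minimal relation of $I$ (a nonzero $\sum t_iu_i\in I$, $t_i\neq0$, distinct paths, no nonempty proper subsum in $I$). $\pi_1(Q,I)$ is the group of classes of closed walks at a fixed vertex $x_0$. Fix a maximal tree $T$ of $Q$, $\gamma_x$ the minimal walk in $T$ from $x_0$ to $x$. For a presentation $\nu$ with kernel $I$ and a group homomorphism $f\colon\pi_1(Q,I)\to k^+$, $\theta_\nu(f)$ is the class of the derivation $\tilde f$ with $\tilde f(\nu(u))=f([\gamma_y^{-1}u\gamma_x]_I)\nu(u)$ for paths $u$ from $x$ to $y$. *)

From HB Require Import structures.
From mathcomp Require Import all_boot all_order all_algebra.
From mathcomp Require Import falgebra.
From Stdlib Require Import Relations.
Set Implicit Arguments. Unset Strict Implicit. Unset Printing Implicit Defensive.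
Import GRing.Theory.
Local Open Scope ring_scope.

(* Conventions:
   - the quiver Q has vertices 'I_n and arrows a finite type Ar with source
     [src] and target [tgt];
   - a path is a pair (x, p) : start vertex x and the list p of arrows in
     traversal order; (x, [::]) is the trivial path e_x;
   - composition in kQ is written right to left, so the path p = [a1;...;ak]
     from x is the element ak ... a1 e_x of kQ;
   - an element of kQ is given as a finite list of (coefficient, path) pairs;
   - a walk is a start vertex and a list of letters (a, true) = a and
     (a, false) = a^{-1}, in traversal order. *)

Section Quiver.
Variables (n : nat) (Ar : finType) (src tgt : Ar -> 'I_n).

Definition qpath := ('I_n * seq Ar)%type.

Fixpoint pvalid (x : 'I_n) (p : seq Ar) : bool :=
  if p is a :: p' then (src a == x) && pvalid (tgt a) p' else true.

Fixpoint pend (x : 'I_n) (p : seq Ar) : 'I_n :=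
  if p is a :: p' then pend (tgt a) p' else x.

Definition letter := (Ar * bool)%type.
Definition lsrc (l : letter) : 'I_n := if l.2 then src l.1 else tgt l.1.
Definition ltgt (l : letter) : 'I_n := if l.2 then tgt l.1 else src l.1.
Definition linv (l : letter) : letter := (l.1, ~~ l.2).

Fixpoint wvalid (x : 'I_n) (w : seq letter) : bool :=
  if w is l :: w' then (lsrc l == x) && wvalid (ltgt l) w' else true.

Fixpoint wend (x : 'I_n) (w : seq letter) : 'I_n :=
  if w is l :: w' then wend (ltgt l) w' else x.

Definition fw (p : seq Ar) : seq letter := map (fun a => (a, true)) p.
Definition winv (w : seq letter) : seq letter := rev (map linv w).

Fixpoint reduced (w : seq letter) : bool :=
  match w with
  | l :: ((l' :: _) as w') => (l' != linv l) && reduced w'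
  | _ => true
  end.

Definition no_oriented_cycles : Prop :=
  forall x p, pvalid x p -> pend x p = x -> p = [::].

Definition in_tree (T : {set Ar}) (w : seq letter) : bool :=
  all (fun l => l.1 \in T) w.

Definition maximal_tree (T : {set Ar}) (x0 : 'I_n) : Prop :=
  (forall x, exists w, [&& wvalid x0 w, in_tree T w & wend x0 w == x]) /\
  (forall x w, wvalid x w -> in_tree T w -> reduced w -> wend x w = x ->
     w = [::]).

Definition tree_walks (T : {set Ar}) (x0 : 'I_n) (gamma : 'I_n -> seq letter)
  : Prop :=
  forall x, [&& wvalid x0 (gamma x), in_tree T (gamma x),
               wend x0 (gamma x) == x & reduced (gamma x)].

Section Algebra.
Variables (K : fieldType) (A : falgType K) (e : 'I_n -> A).

Definition idempotent (a : A) := a * a = a.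
Definition primitive (a : A) : Prop :=
  a != 0 /\ idempotent a /\
  forall b c : A, idempotent b -> idempotent c -> b * c = 0 -> c * b = 0 ->
    b + c = a -> b = 0 \/ c = 0.
Definition complete_prim_orth : Prop :=
  (forall i, primitive (e i)) /\
  (forall i j, i != j -> e i * e j = 0) /\
  \sum_i e i = 1.

Definition connected_alg : Prop :=
  forall c : A, idempotent c -> (forall a, c * a = a * c) -> c = 0 \/ c = 1.

(* the algebra map kQ -> A determined by the images of the arrows *)
Definition evp (nu : Ar -> A) (u : qpath) : A :=
  (\prod_(a <- rev u.2) nu a) * e u.1.

Definition evl (nu : Ar -> A) (s : seq (K * qpath)) : A :=
  \sum_(c <- s) c.1 *: evp nu c.2.

Definition all_valid (s : seq (K * qpath)) : bool :=
  all (fun c => pvalid c.2.1 c.2.2) s.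

(* nu : kQ ->> A is a presentation: an algebra map with nu(e_i) = e_i
   (built into evp), surjective, with admissible kernel *)
Definition presentation (nu : Ar -> A) : Prop :=
  (forall a, e (tgt a) * nu a * e (src a) = nu a) /\
  (forall b : A, exists s, all_valid s /\ evl nu s = b) /\
  (exists N, (2 <= N)%N /\
     forall x p, pvalid x p -> (N <= size p)%N -> evp nu (x, p) = 0) /\
  (forall s, all_valid s -> uniq (map snd s) -> evl nu s = 0 ->
     forall c, c \in s -> (size c.2.2 <= 1)%N -> c.1 = 0).

(* dilatation alpha |-> c alpha *: alpha, c alpha <> 0 ; nu o D on arrows *)
Definition dilatation (c : Ar -> K) : Prop := forall a, c a != 0.
Definition compose_dil (nu : Ar -> A) (c : Ar -> K) : Ar -> A :=
  fun a => c a *: nu a.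

Definition minrel (nu : Ar -> A) (s : seq (K * qpath)) : Prop :=
  [&& s != [::], all_valid s, uniq (map snd s) & all (fun c => c.1 != 0) s]
  /\ evl nu s = 0 /\
      (forall s', subseq s' s -> s' != [::] -> (size s' < size s)%N ->
        evl nu s' != 0).

Definition walk := ('I_n * seq letter)%type.

Inductive hstep (nu : Ar -> A) : walk -> walk -> Prop :=
| hstep_cancel x u l v :
    wvalid x (u ++ l :: linv l :: v) ->
    hstep nu (x, u ++ l :: linv l :: v) (x, u ++ v)
| hstep_rel x u v s p q :
    minrel nu s -> p \in map snd s -> q \in map snd s ->
    wend x u = p.1 -> wend x u = q.1 ->
    wvalid x (u ++ fw p.2 ++ v) -> wvalid x (u ++ fw q.2 ++ v) ->
    hstep nu (x, u ++ fw p.2 ++ v) (x, u ++ fw q.2 ++ v).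

Definition htp (nu : Ar -> A) : relation walk :=
  clos_refl_sym_trans walk (hstep nu).

(* group homomorphisms pi_1(Q, Ker nu) -> k^+, given as functions on closed
   walks at x0, constant on homotopy classes and additive *)
Definition closed_at (x0 : 'I_n) (w : seq letter) :=
  wvalid x0 w && (wend x0 w == x0).

Definition pi1_hom (nu : Ar -> A) (x0 : 'I_n) (f : seq letter -> K) : Prop :=
  (forall w w', closed_at x0 w -> closed_at x0 w' ->
     htp nu (x0, w) (x0, w') -> f w = f w') /\
  (forall w w', closed_at x0 w -> closed_at x0 w' -> f (w ++ w') = f w + f w').

Definition der0 (d : A -> A) : Prop :=
  (forall a b, d (a + b) = d a + d b) /\
  (forall (k : K) a, d (k *: a) = k *: d a) /\
  (forall a b, d (a * b) = d a * b + a * d b) /\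
  (forall i, d (e i) = 0).

Definition ftilde (nu : Ar -> A) (gamma : 'I_n -> seq letter)
  (f : seq letter -> K) (d : A -> A) : Prop :=
  der0 d /\
  forall x p, pvalid x p ->
    d (evp nu (x, p)) = f (gamma x ++ fw p ++ winv (gamma (pend x p)))
                          *: evp nu (x, p).

(* theta_mu(f) = theta_nu(f) in HH^1(A) = Der_0(A)/Int_0(A) *)
Definition same_HH1_class (d1 d2 : A -> A) : Prop :=
  exists eps : 'I_n -> K, forall a,
    d1 a - d2 a = (\sum_i eps i *: e i) * a - a * (\sum_i eps i *: e i).

End Algebra.
End Quiver.

From HB Require Import structures.
From mathcomp Require Import all_boot all_order all_algebra.
From mathcomp Require Import falgebra.
Set Implicit Arguments. Unset Strict Implicit. Unset Printing Implicit Defensive.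
Import GRing.Theory.
Local Open Scope ring_scope.

(* The dilatation D multiplies a path u by the nonzero scalar c(u), the
   product of the coefficients of its arrows, so mu(u) = c(u) nu(u), while
   the weight f[gamma_y^-1 u gamma_x] depends on the path u alone.  Hence the
   two derivations f~ take the same value on every nu(u); the images of the
   paths span A, so they coincide and theta_mu(f) = theta_nu(f) with no inner
   derivation needed. *)

Section DilatedPresentation.
Variables (K : fieldType) (A : falgType K).
Variables (n : nat) (Ar : finType) (src tgt : Ar -> 'I_n) (e : 'I_n -> A).

Lemma evp_compose_dil (nu : Ar -> A) (c : Ar -> K) (u : qpath n Ar) :
  evp e (compose_dil nu c) u = (\prod_(a <- rev u.2) c a) *: evp e nu u.
Proof. by rewrite /evp /compose_dil scaler_prod scalerAl. Qed.

Lemma dilatation_prod_neq0 (c : Ar -> K) (r : seq Ar) :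
  dilatation c -> \prod_(a <- r) c a != 0.
Proof. by move=> c_neq0; rewrite prodf_seq_neq0; apply/allP => a _; apply: c_neq0. Qed.

Lemma der0_evl (d : A -> A) (nu : Ar -> A) (s : seq (K * qpath n Ar)) :
  der0 e d -> d (evl e nu s) = \sum_(c <- s) c.1 *: d (evp e nu c.2).
Proof.
move=> [dD [dZ _]]; have d0 : d 0 = 0 by have := dZ 0 0; rewrite !scale0r.
rewrite /evl; elim: s => [|c s IHs]; first by rewrite !big_nil.
by rewrite !big_cons dD dZ IHs.
Qed.

Lemma eq_der0_on_paths (d1 d2 : A -> A) (nu : Ar -> A) :
  der0 e d1 -> der0 e d2 ->
  (forall b : A, exists s, all_valid src tgt s /\ evl e nu s = b) ->
  (forall x p, pvalid src tgt x p -> d1 (evp e nu (x, p)) = d2 (evp e nu (x, p))) ->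
  d1 =1 d2.
Proof.
move=> der1 der2 span eq_paths b; have [s [/allP s_valid <-]] := span b.
rewrite !der0_evl //; apply: eq_big_seq => -[k [x p]] /s_valid p_valid /=.
by rewrite eq_paths.
Qed.

Lemma ftilde_compose_dil_paths (gamma : 'I_n -> seq (letter Ar))
    (f : seq (letter Ar) -> K) (nu : Ar -> A) (c : Ar -> K) (d1 d2 : A -> A) :
  dilatation c ->
  ftilde src tgt e (compose_dil nu c) gamma f d1 ->
  ftilde src tgt e nu gamma f d2 ->
  forall x p, pvalid src tgt x p -> d1 (evp e nu (x, p)) = d2 (evp e nu (x, p)).
Proof.
move=> c_neq0 [[_ [d1Z _]] d1_paths] [_ d2_paths] x p p_valid.
have /= mu_path := evp_compose_dil nu c (x, p).
apply: (scalerI (dilatation_prod_neq0 (rev p) c_neq0)).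
by rewrite -d1Z -mu_path d1_paths // d2_paths // mu_path !scalerA mulrC.
Qed.

Lemma same_HH1_class_eq (d1 d2 : A -> A) : d1 =1 d2 -> same_HH1_class e d1 d2.
Proof.
move=> eq_d; exists (fun=> 0) => a.
by rewrite eq_d subrr big1 ?mul0r ?mulr0 ?subrr // => i _; rewrite scale0r.
Qed.

End DilatedPresentation.

Theorem proposition3p1 (K : closedFieldType) (A : falgType K)
  (n : nat) (Ar : finType) (src tgt : Ar -> 'I_n) (e : 'I_n -> A)
  (x0 : 'I_n) (T : {set Ar}) (gamma : 'I_n -> seq (Ar * bool))
  (nu : Ar -> A) (c : Ar -> K) (f : seq (Ar * bool) -> K) :
  complete_prim_orth e ->
  connected_alg A ->
  no_oriented_cycles src tgt ->
  maximal_tree src tgt T x0 ->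
  tree_walks src tgt T x0 gamma ->
  presentation src tgt e nu ->
  dilatation c ->
  pi1_hom src tgt e nu x0 f ->
  forall d1 d2 : A -> A,
    ftilde src tgt e (compose_dil nu c) gamma f d1 ->
    ftilde src tgt e nu gamma f d2 ->
    same_HH1_class e d1 d2.
Proof.
move=> _ _ _ _ _ [_ [span _]] c_neq0 _ d1 d2 fd1 fd2.
apply: same_HH1_class_eq.
apply: (eq_der0_on_paths fd1.1 fd2.1 span).
exact: ftilde_compose_dil_paths fd1 fd2.
Qed.
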